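(* Let $M=M(S^2;\frac{q_1}{p_1},\frac{q_2}{p_2},\frac{q_3}{p_3})$ with $e(M)\neq0$. Suppose that for some $\{i,j,k\}=\{1,2,3\}$ we have $d:=\gcd(p_i,p_j)>2$ and $s:=\gcd(p_ip_j/d,\,p_k)>2$. If $d\neq4$ or $s\neq4$, then $x_M>0$ (for all $q_1,q_2,q_3$ with $q_i$ coprime to $p_i$).
   Context: $M(S^2;\frac{q_1}{p_1},\frac{q_2}{p_2},\frac{q_3}{p_3})$ ($(p_i,q_i)$ coprime, $p_i\ge1$) is the closed Seifert manifold obtained from $S_{0,3}\times S^1$ by gluing solid tori whose meridians are $p_ic_i+q_ih_i$; $e(M)=\sum_iq_i/p_i$; $\pi_1(M)=\langle c_1,c_2,c_3,h\mid [c_i,h]=1=c_i^{p_i}h^{q_i},\ c_1c_2c_3=1\rangle$. An abelian character is the trace of a diagonal representation $\pi_1(M)\to\mathrm{SL}_2(\mathbb{C})$; it is exceptional if it is the trace of a representation $\rho$ with $\rho(h)=\pm I$ and $\rho(c_i)\neq\pm I$ for $i=1,2,3$; $x_M$ is the number of exceptional abelian characters. *)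

From HB Require Import structures.
From mathcomp Require Import all_boot all_order all_algebra.
Set Implicit Arguments. Unset Strict Implicit. Unset Printing Implicit Defensive.
Import Order.TTheory GRing.Theory Num.Theory.
Local Open Scope ring_scope.

(* Generators of pi_1(M): [Some i] is c_(i+1) (i : 'I_3), [None] is h. *)
Definition gen := option 'I_3.

(* Words in the generators and their inverses: (x, true) stands for x^-1.
   Every element of pi_1(M) is represented by such a word. *)
Definition word := seq (gen * bool).

Section Reps.
Variable C : numClosedFieldType.

Definition eval_word (g : gen -> 'M[C]_2) (w : word) : 'M[C]_2 :=
  \prod_(x <- w) (if x.2 then (g x.1)^-1 else g x.1).

(* g defines a representation pi_1(M) -> SL_2(C), where
   pi_1(M) = < c1,c2,c3,h | [c_i,h]=1 = c_i^{p_i} h^{q_i}, c1 c2 c3 = 1 >. *)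
Definition is_SL2_rep (p : 'I_3 -> nat) (q : 'I_3 -> int) (g : gen -> 'M[C]_2) : Prop :=
  (forall x, \det (g x) = 1) /\
  (forall i : 'I_3, g (Some i) * g None = g None * g (Some i)) /\
  (forall i : 'I_3, (g (Some i)) ^+ (p i) * (g None) ^ (q i) = 1) /\
  g (Some 0) * g (Some 1) * g (Some 2) = 1.

Definition is_diagonal_rep p q (g : gen -> 'M[C]_2) : Prop :=
  is_SL2_rep p q g /\ forall x, is_diag_mx (g x).

Definition is_trace_of (g : gen -> 'M[C]_2) (chi : word -> C) : Prop :=
  forall w, chi w = \tr (eval_word g w).

Definition pmI (A : 'M[C]_2) : bool := (A == 1%:M) || (A == (-1)%:M).

Definition abelian_character p q (chi : word -> C) : Prop :=
  exists g, is_diagonal_rep p q g /\ is_trace_of g chi.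

Definition exceptional_character p q (chi : word -> C) : Prop :=
  exists g, [/\ is_SL2_rep p q g, is_trace_of g chi, pmI (g None)
            & forall i : 'I_3, ~~ pmI (g (Some i))].

Definition xM_pos p q : Prop :=
  exists chi : word -> C, abelian_character p q chi /\ exceptional_character p q chi.
End Reps.

Definition euler_number (p : 'I_3 -> nat) (q : 'I_3 -> int) : rat :=
  \sum_(i < 3) (q i)%:~R / (p i)%:R.

(* An abelian representation with [rho(h) = 1] is given by three numbers
   [lam_l] with [lam_l ^ p_l = 1] and [lam_1 lam_2 lam_3 = 1]; its character is
   exceptional as soon as no [lam_l] is [+-1]. Since
   [s = gcd(lcm(p_i, p_j), p_k) = lcm(gcd(p_i, p_k), gcd(p_j, p_k))], the
   hypotheses yield distinct indices [a, b, c] such that [D = gcd(p_a, p_b)] and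
   [X = gcd(p_a, p_c)] both exceed 2 and are not both 4. With [z] a primitive
   [D]-th and [w] a primitive [X]-th root of unity, take
   [(lam_a, lam_b, lam_c) = (z w^(+-1), z^-1, w^(-+1))]: if both choices of
   sign gave [(z w^(+-1))^2 = 1] then [z^4 = w^4 = 1], forcing [D = X = 4]. *)
From HB Require Import structures.
From mathcomp Require Import all_boot all_order all_algebra.
From mathcomp Require Import cyclic separable.
From mathcomp Require cyclotomic.
Set Implicit Arguments. Unset Strict Implicit. Unset Printing Implicit Defensive.
Import Order.TTheory GRing.Theory Num.Theory.
Local Open Scope ring_scope.

Lemma gcdn_lcmnl m n k : gcdn (lcmn m n) k = lcmn (gcdn m k) (gcdn n k).
Proof. exact: Order.NatDvd.meetUl. Qed.

Lemma lcmn_gt2_split d e f :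
  (2 < lcmn e f)%N -> (d != 4%N) || (lcmn e f != 4%N) ->
  (2 < e)%N && ((d != 4%N) || (e != 4%N)) ||
  (2 < f)%N && ((d != 4%N) || (f != 4%N)).
Proof.
move=> s_gt2 s4; apply/negPn/negP.
rewrite negb_or !negb_and -!leqNgt !negb_or !negbK.
case/andP=> /orP[e_le2 | /andP[/eqP d4 /eqP e4]] /orP[f_le2 | /andP[/eqP d4' /eqP f4]].
- by move: s_gt2 s4 e_le2 f_le2; case: e => [|[|[|//]]]; case: f => [|[|[|//]]].
- by move: s_gt2 s4 e_le2; rewrite d4' f4; case: e => [|[|[|//]]].
- by move: s_gt2 s4 f_le2; rewrite d4 e4; case: f => [|[|[|//]]].
- by move: s4; rewrite d4 e4 f4.
Qed.

Lemma dvdn4_gt2_eq4 n : (2 < n)%N -> (n %| 4)%N -> n = 4%N.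
Proof.
move=> n_gt2 n_dvd4; have := dvdn_leq (isT : (0 < 4)%N) n_dvd4.
by move: n_gt2 n_dvd4; case: n => [|[|[|[|[|]]]]].
Qed.

Lemma distinct3_perm_enum (a b c : 'I_3) :
  a != b -> b != c -> a != c -> perm_eq [:: a; b; c] (enum 'I_3).
Proof.
move=> ab bc ac; have uniq_abc : uniq [:: a; b; c].
  by rewrite /= !inE negb_or ab ac bc.
apply: uniq_perm (enum_uniq _) _ => //.
apply: (uniq_min_size uniq_abc _ _).2 => [l _ | ]; first by rewrite mem_enum.
by rewrite size_enum_ord.
Qed.

Lemma closed_field_prim_root_exists (F : closedFieldType) n :
  n%:R != 0 :> F -> exists z : F, n.-primitive_root z.
Proof.
move=> n_neq0; have n_gt0 : (0 < n)%N by case: n n_neq0 => // /eqP.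
have [r Dp] := closed_field_poly_normal ('X^n - 1 : {poly F}).
rewrite (monicP _) ?monicXnsubC // scale1r in Dp.
have rn1 : all n.-unity_root r by apply/allP=> z; rewrite -root_prod_XsubC -Dp.
have sz_r : (n < (size r).+1)%N.
  by rewrite -(size_prod_XsubC r id) -Dp size_XnsubC.
have [|z] := hasP (has_prim_root n_gt0 rn1 _ sz_r); last by exists z.
by rewrite -separable_prod_XsubC -Dp cyclotomic.separable_Xn_sub_1.
Qed.

Section PrimitiveRoots.
Variables (F : fieldType) (n : nat) (z : F).
Hypothesis prim_z : n.-primitive_root z.

Lemma prim_root_expr_dvd m : (n %| m)%N -> z ^+ m = 1.
Proof. by rewrite (prim_order_dvd prim_z) => /eqP. Qed.

Lemma prim_root_sqr_neq1 : (2 < n)%N -> z ^+ 2 != 1.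
Proof. by rewrite -(prim_order_dvd prim_z) ltnNge; apply: contra; apply: dvdn_leq. Qed.

Lemma prim_root_neq0 : z != 0.
Proof.
apply/eqP=> z0; have := prim_expr_order prim_z.
by rewrite z0 expr0n (gtn_eqF (prim_order_gt0 prim_z)) => /esym/eqP; rewrite oner_eq0.
Qed.

End PrimitiveRoots.

Lemma prim_roots_sqr_eq1_dvd4 (F : fieldType) n m (z w : F) :
  n.-primitive_root z -> m.-primitive_root w ->
  (z * w) ^+ 2 = 1 -> (z / w) ^+ 2 = 1 -> (n %| 4)%N && (m %| 4)%N.
Proof.
move=> prim_z prim_w zw2 zVw2.
have w_neq0 := prim_root_neq0 prim_w.
have z2_w2 : z ^+ 2 = w ^+ 2.
  by rewrite -[LHS](divfK (expf_neq0 2 w_neq0)) -expr_div_n zVw2 mul1r.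
rewrite (prim_order_dvd prim_z) (prim_order_dvd prim_w).
have z4 : z ^+ 4 = 1 by rewrite -[4%N]/(2 + 2)%N exprD {2}z2_w2 -exprMn zw2.
have w4 : w ^+ 4 = 1 by rewrite -[4%N]/(2 + 2)%N exprD -{1}z2_w2 -exprMn zw2.
by rewrite z4 w4 eqxx.
Qed.

Section Torus.
Variable F : fieldType.

Definition torus (x : F) : 'M[F]_2 :=
  diag_mx (\row_(t < 2) if t == 0 then x else x^-1).

Lemma torusM x y : torus x * torus y = torus (x * y).
Proof.
rewrite -mulmxE mulmx_diag; congr diag_mx.
by apply/rowP => t; rewrite !mxE; case: ifP => // _; rewrite invfM.
Qed.

Lemma torus1 : torus 1 = 1.
Proof.
rewrite -[RHS]/(1%:M) -diag_const_mx; congr diag_mx.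
by apply/rowP => t; rewrite !mxE invr1 if_same.
Qed.

Lemma torusX x n : torus x ^+ n = torus (x ^+ n).
Proof. by elim: n => [|n IHn]; rewrite ?torus1 // !exprS IHn torusM. Qed.

Lemma det_torus x : x != 0 -> \det (torus x) = 1.
Proof. by move=> x_neq0; rewrite det_diag !big_ord_recr big_ord0 !mxE /= mul1r mulfV. Qed.

End Torus.

Lemma torus_pmI (C : numClosedFieldType) (x : C) : pmI (torus x) -> x ^+ 2 = 1.
Proof.
by case/orP=> /eqP/(congr1 (fun A : 'M[C]_2 => A 0 0)); rewrite !mxE /= mulr1n => ->;
  rewrite ?sqrrN expr1n.
Qed.

Section ExceptionalAbelianCharacters.
Variables (C : numClosedFieldType) (p : 'I_3 -> nat) (q : 'I_3 -> int).

Lemma xM_pos_of_roots_of_unity (lam : 'I_3 -> C) :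
  (forall l, lam l ^+ p l = 1) -> (forall l, lam l ^+ 2 != 1) ->
  \prod_(l < 3) lam l = 1 -> xM_pos C p q.
Proof.
move=> lam_p lam2 prod_lam.
have lam_neq0 l : lam l != 0.
  have /prodf_neq0 prod_neq0 : \prod_(l < 3) lam l != 0 by rewrite prod_lam oner_neq0.
  exact: prod_neq0.
pose g (x : gen) := if x is Some l then torus (lam l) else 1.
have g_rep : is_SL2_rep p q g.
  split; [|split; [|split]].
  - by case=> [l|] /=; [exact: det_torus | exact: det1].
  - by move=> l; rewrite /= mul1r mulr1.
  - by move=> l /=; rewrite exp1rz mulr1 torusX lam_p torus1.
  - rewrite /= !torusM -torus1 -prod_lam !big_ord_recr big_ord0 /= [in RHS]mul1r.
    by congr (torus (lam _ * lam _ * lam _)); apply: val_inj.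
have g_diag x : is_diag_mx (g x).
  by case: x => [l|]; [exact: diag_mx_is_diag | exact: scalar_mx_is_diag].
exists (fun w => \tr (eval_word g w)); split; exists g => //.
split=> // [|l]; first by rewrite /pmI eqxx.
by apply: contra (lam2 l) => /torus_pmI ->.
Qed.

Lemma xM_pos_of_root_pair (a b c : 'I_3) (z w : C) :
  a != b -> b != c -> a != c -> z != 0 -> w != 0 ->
  z ^+ p a = 1 -> z ^+ p b = 1 -> w ^+ p a = 1 -> w ^+ p c = 1 ->
  z ^+ 2 != 1 -> w ^+ 2 != 1 -> (z * w) ^+ 2 != 1 -> xM_pos C p q.
Proof.
move=> ab bc ac z_neq0 w_neq0 za zb wa wc z2 w2 zw2.
pose lam l := if l == a then z * w else if l == b then z^-1 else w^-1.
have lam_a : lam a = z * w by rewrite /lam eqxx.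
have lam_b : lam b = z^-1 by rewrite /lam eq_sym (negPf ab) eqxx.
have lam_c : lam c = w^-1 by rewrite /lam eq_sym (negPf ac) eq_sym (negPf bc).
have abc_perm := distinct3_perm_enum ab bc ac.
have lam_cases (P : 'I_3 -> C -> Prop) :
    P a (z * w) -> P b z^-1 -> P c w^-1 -> forall l, P l (lam l).
  move=> Pa Pb Pc l; have : l \in [:: a; b; c] by rewrite (perm_mem abc_perm) mem_enum.
  by rewrite !inE => /or3P[] /eqP->; rewrite ?lam_a ?lam_b ?lam_c.
apply: (xM_pos_of_roots_of_unity (lam := lam)).
- apply: (lam_cases (fun l x => x ^+ p l = 1));
    by rewrite ?exprMn ?exprVn ?za ?zb ?wa ?wc ?invr1 ?mulr1.
- by apply: (lam_cases (fun _ x => x ^+ 2 != 1)); rewrite ?exprVn ?invr_eq1.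
- rewrite -big_enum -(perm_big _ abc_perm) /= !big_cons big_nil lam_a lam_b lam_c.
  by rewrite mulr1 -invfM mulfV ?mulf_neq0.
Qed.

Lemma xM_pos_of_gcd_pair (a b c : 'I_3) :
  a != b -> b != c -> a != c ->
  (2 < gcdn (p a) (p b))%N -> (2 < gcdn (p a) (p c))%N ->
  (gcdn (p a) (p b) != 4%N) || (gcdn (p a) (p c) != 4%N) -> xM_pos C p q.
Proof.
set D := gcdn _ _; set X := gcdn _ _ => ab bc ac D_gt2 X_gt2 DX4.
have root_exists n : (2 < n)%N -> exists z : C, n.-primitive_root z.
  by case: n => // n _; apply: closed_field_prim_root_exists; rewrite pnatr_eq0.
have [z prim_z] := root_exists D D_gt2; have [w prim_w] := root_exists X X_gt2.
have z_neq0 := prim_root_neq0 prim_z; have w_neq0 := prim_root_neq0 prim_w.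
have [za zb] : z ^+ p a = 1 /\ z ^+ p b = 1.
  by rewrite !(prim_root_expr_dvd prim_z) ?dvdn_gcdl ?dvdn_gcdr.
have [wa wc] : w ^+ p a = 1 /\ w ^+ p c = 1.
  by rewrite !(prim_root_expr_dvd prim_w) ?dvdn_gcdl ?dvdn_gcdr.
have z2 := prim_root_sqr_neq1 prim_z D_gt2; have w2 := prim_root_sqr_neq1 prim_w X_gt2.
have : ((z * w) ^+ 2 != 1) || ((z / w) ^+ 2 != 1).
  move: DX4; rewrite -!negb_and; apply: contra => /andP[/eqP zw2 /eqP zVw2].
  have /andP[D4 X4] := prim_roots_sqr_eq1_dvd4 prim_z prim_w zw2 zVw2.
  by rewrite (dvdn4_gt2_eq4 D_gt2 D4) (dvdn4_gt2_eq4 X_gt2 X4).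
case/orP=> [zw2 | zVw2]; first exact: (xM_pos_of_root_pair ab bc ac z_neq0 w_neq0).
apply: (xM_pos_of_root_pair ab bc ac z_neq0 (invr_neq0 w_neq0)) => //;
  by rewrite exprVn ?wa ?wc ?invr1 // invr_eq1.
Qed.

End ExceptionalAbelianCharacters.

Theorem proposition5p6 (C : numClosedFieldType)
    (p : 'I_3 -> nat) (q : 'I_3 -> int)
    (hp : forall l, (0 < p l)%N)
    (hcop : forall l, coprimez (p l)%:Z (q l))
    (he : euler_number p q != 0)
    (i j k : 'I_3) (hij : i != j) (hjk : j != k) (hik : i != k) :
  let d := gcdn (p i) (p j) in
  let s := gcdn (p i * p j %/ d) (p k) in
  (2 < d)%N -> (2 < s)%N -> (d != 4%N) || (s != 4%N) ->
  xM_pos C p q.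
Proof.
move=> d s d_gt2; rewrite /s -/(lcmn (p i) (p j)) gcdn_lcmnl => s_gt2 ds4.
case/orP: (lcmn_gt2_split s_gt2 ds4) => /andP[e_gt2 de4].
  exact: (xM_pos_of_gcd_pair C q hij hjk hik d_gt2 e_gt2 de4).
rewrite /d gcdnC in d_gt2 de4.
by apply: (xM_pos_of_gcd_pair C q _ hik hjk d_gt2 e_gt2 de4); rewrite eq_sym.
Qed.
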